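(* Let $\mathbf{W}=\langle W;\to,\neg,{}^{+},{}^{-},1\rangle$ be a quasi-Wajsberg* algebra and let $\mu,\tau$ be the relations on $W$ given by: $\langle x,y\rangle\in\mu$ iff $x\le y$ and $y\le x$; $\langle x,y\rangle\in\tau$ iff $x=y$ or $x,y\in R(W)$. Then: (1) for any $x,y\in W$, $\langle x,y\rangle\in\mu$ iff $0\to x=0\to y$; (2) $\mu\cap\tau=\Delta$, the diagonal relation on $W$; (3) if $G(\mu\cup\tau)$ denotes the union of all finite relational products $\theta_1\circ\theta_2\circ\cdots\circ\theta_k$ ($k<\infty$) with each $\theta_i\in\{\mu,\tau\}$, then $G(\mu\cup\tau)=\nabla$, the all relation $W\times W$; (4) $\mu\circ\tau=\nabla$ iff $x/\mu\cap y/\tau\neq\varnothing$ for all $x,y\in W$.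
   Context: A quasi-Wajsberg* algebra is an algebra $\langle W;\to,\neg,{}^{+},{}^{-},1\rangle$ of type $\langle2,1,1,1,0\rangle$ such that for all $x,y,z\in W$: (QW*1) $x\to y=\neg y\to\neg x$; (QW*2) $(x\to 1)\to((y\to 1)\to z)=(y\to 1)\to((x\to 1)\to z)$; (QW*3) $(1\to x)\to 1=1$; (QW*4) $(z\to z)\to(x\to y)=x\to y$; (QW*5) $(1\to 1)\to x^{+}=((1\to 1)\to x)^{+}=(x\to 1)\to 1$ and $(1\to 1)\to x^{-}=((1\to 1)\to x)^{-}=(x\to\neg 1)\to\neg 1$; (QW*6) $x\to y=(y^{+}\to x^{-})\to(x^{+}\to y^{-})$; (QW*7) $\neg(x\to y)=y\to x$; (QW*8) $\neg\neg x=x$; (QW*9) $(x\to(\neg x\to y))^{+}=x^{+}\to(\neg x^{+}\to y^{+})$; (QW*10) $x\vee y=y\vee x$; (QW*11) $x\vee(y\vee z)=(x\vee y)\vee z$; (QW*12) $x\to(y\vee z)=(x\to y)\vee(x\to z)$; where $x\vee y:=((x^{+}\to y^{+})^{+}\to(\neg x)^{-})\to((y^{-}\to x^{-})^{-}\to x^{-})$. Conventions: ${}^+,{}^-$ bind tighter than $\neg$, which binds tighter than $\to$. Put $0:=1\to 1$, $x\le y$ iff $x\vee y=0\to y$, and $R(W):=\{x\in W:0\to x=x\}$. $x/\theta$ denotes the $\theta$-class of $x$, and $\circ$ is relational composition: $\langle x,y\rangle\in\mu\circ\tau$ iff there is $z$ with $\langle x,z\rangle\in\mu$ and $\langle z,y\rangle\in\tau$.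 *)

From Stdlib Require Import List.
Set Implicit Arguments.

Record qw_ops : Type := QWOps {
  carrier :> Type;
  imp : carrier -> carrier -> carrier;
  neg : carrier -> carrier;
  pl : carrier -> carrier;
  mi : carrier -> carrier;
  one : carrier
}.
Arguments imp {q}. Arguments neg {q}. Arguments pl {q}. Arguments mi {q}. Arguments one {q}.

Section Derived.
Variable W : qw_ops.

Definition zero : W := @imp W (@one W) (@one W).

Definition join (x y : W) : W :=
  imp (imp (pl (imp (pl x) (pl y))) (mi (neg x)))
      (imp (mi (imp (mi y) (mi x))) (mi x)).

Definition le (x y : W) : Prop := join x y = imp zero y.

Definition inR (x : W) : Prop := imp zero x = x.
End Derived.
Arguments zero {W}. Arguments join {W}. Arguments le {W}. Arguments inR {W}.

Definition is_quasi_wajsberg_star (W : qw_ops) : Prop :=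
  (forall x y : W, imp x y = imp (neg y) (neg x)) /\
  (forall x y z : W, imp (imp x one) (imp (imp y one) z)
                   = imp (imp y one) (imp (imp x one) z)) /\
  (forall x : W, imp (imp one x) one = one) /\
  (forall x y z : W, imp (imp z z) (imp x y) = imp x y) /\
  (forall x : W, imp (imp one one) (pl x) = pl (imp (imp one one) x) /\
                 pl (imp (imp one one) x) = imp (imp x one) one) /\
  (forall x : W, imp (imp one one) (mi x) = mi (imp (imp one one) x) /\
                 mi (imp (imp one one) x) = imp (imp x (neg (@one W))) (neg (@one W))) /\
  (forall x y : W, imp x y = imp (imp (pl y) (mi x)) (imp (pl x) (mi y))) /\
  (forall x y : W, neg (imp x y) = imp y x) /\
  (forall x : W, neg (neg x) = x) /\
  (forall x y : W, pl (imp x (imp (neg x) y))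
                 = imp (pl x) (imp (neg (pl x)) (pl y))) /\
  (forall x y : W, join x y = join y x) /\
  (forall x y z : W, join x (join y z) = join (join x y) z) /\
  (forall x y z : W, imp x (join y z) = join (imp x y) (imp x z)).

Definition rcomp (T : Type) (m t : T -> T -> Prop) : T -> T -> Prop :=
  fun x y => exists z, m x z /\ t z y.

Fixpoint rcomp_list (T : Type) (th : T -> T -> Prop) (l : list (T -> T -> Prop))
  : T -> T -> Prop :=
  match l with
  | nil => th
  | th' :: l' => rcomp th (rcomp_list th' l')
  end.

Definition Gen (T : Type) (m t : T -> T -> Prop) : T -> T -> Prop :=
  fun x y => exists (th : T -> T -> Prop) (l : list (T -> T -> Prop)),
    (th = m \/ th = t) /\ Forall (fun r => r = m \/ r = t) l /\ rcomp_list th l x y.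

Definition mu_rel {W : qw_ops} : W -> W -> Prop :=
  fun x y => le x y /\ le y x.

Definition tau_rel {W : qw_ops} : W -> W -> Prop :=
  fun x y => x = y \/ (inR x /\ inR y).

From Stdlib Require Import List.
Set Implicit Arguments.

(** The map [x |-> 0 -> x] is idempotent, has image [R(W)], and [x <= y]
    depends only on [0 -> x] and [0 -> y], while [x v x = 0 -> x].  Hence
    [mu] is exactly the kernel of [x |-> 0 -> x]; since [tau] identifies all of
    [R(W)], every pair is linked by [x mu (0 -> x) tau (0 -> y) mu y], and a
    [mu]-class meets a [tau]-class only in a point. *)

Section RelationProducts.
Variables (T : Type) (m t : T -> T -> Prop).

Lemma Gen_of_chain (x a b y : T) : m x a -> t a b -> m b y -> Gen m t x y.
Proof.
  intros Hxa Hab Hby. unfold Gen. exists m, (t :: m :: nil).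
  split; [now left|]. split; [repeat apply Forall_cons; auto|].
  exists a. split; [exact Hxa|]. now exists b.
Qed.

Lemma rcomp_total_iff_sym (t_sym : forall x y, t x y -> t y x) :
  (forall x y, rcomp m t x y) <-> (forall x y, exists z, m x z /\ t y z).
Proof.
  split; intros H x y; destruct (H x y) as (z & Hxz & Hz); exists z; auto.
Qed.

End RelationProducts.

Section QuasiWajsbergStar.
Variable W : qw_ops.
Hypothesis HW : is_quasi_wajsberg_star W.

Let qw1 : forall x y : W, imp x y = imp (neg y) (neg x).
Proof. now destruct HW. Qed.
Let qw3 : forall x : W, imp (imp one x) one = one.
Proof. now destruct HW as (_ & _ & q & _). Qed.
Let qw4 : forall x y z : W, imp (imp z z) (imp x y) = imp x y.
Proof. now destruct HW as (_ & _ & _ & q & _). Qed.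
Let qw5p : forall x : W,
  imp zero (pl x) = imp (imp x one) one /\ pl (imp zero x) = imp (imp x one) one.
Proof.
  intro x. destruct HW as (_ & _ & _ & _ & q & _). destruct (q x) as [E1 E2].
  unfold zero. split; congruence.
Qed.
Let qw5m : forall x : W,
  imp zero (mi x) = imp (imp x (neg one)) (neg one) /\
  mi (imp zero x) = imp (imp x (neg one)) (neg one).
Proof.
  intro x. destruct HW as (_ & _ & _ & _ & _ & q & _). destruct (q x) as [E1 E2].
  unfold zero. split; congruence.
Qed.
Let qw6 : forall x y : W, imp x y = imp (imp (pl y) (mi x)) (imp (pl x) (mi y)).
Proof. now destruct HW as (_ & _ & _ & _ & _ & _ & q & _). Qed.
Let qw7 : forall x y : W, neg (imp x y) = imp y x.
Proof. now destruct HW as (_ & _ & _ & _ & _ & _ & _ & q & _). Qed.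
Let qw8 : forall x : W, neg (neg x) = x.
Proof. now destruct HW as (_ & _ & _ & _ & _ & _ & _ & _ & q & _). Qed.
Let qw10 : forall x y : W, join x y = join y x.
Proof. now destruct HW as (_ & _ & _ & _ & _ & _ & _ & _ & _ & _ & q & _). Qed.
Let qw12 : forall x y z : W, imp x (join y z) = join (imp x y) (imp x z).
Proof. now destruct HW as (_ & _ & _ & _ & _ & _ & _ & _ & _ & _ & _ & _ & q). Qed.

Lemma zero_imp_imp (x y : W) : imp zero (imp x y) = imp x y.
Proof. apply qw4. Qed.

Lemma zero_imp_idem (x : W) : imp zero (imp zero x) = imp zero x.
Proof. apply zero_imp_imp. Qed.

Lemma inR_zero_imp (x : W) : inR (imp zero x).
Proof. apply zero_imp_idem. Qed.

Lemma imp_refl (x : W) : imp x x = zero.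
Proof.
  (* QW*4 gives [0 -> (x -> x) = x -> x] and [(x -> x) -> 0 = 0]; QW*7 makes
     each side the negation of the other. *)
  rewrite <- (qw4 x x one). rewrite <- (qw7 (imp x x) (imp one one)).
  rewrite (qw4 one one x). apply qw7.
Qed.

Lemma zero_imp_one : imp zero (@one W) = one.
Proof.
  pose proof (zero_imp_imp (imp one one) one) as E. now rewrite qw3 in E.
Qed.

Lemma neg_zero : neg (@zero W) = zero.
Proof. apply qw7. Qed.

Lemma zero_imp_neg (x : W) : imp zero (neg x) = neg (imp zero x).
Proof. now rewrite qw1, qw8, neg_zero, qw7. Qed.

Lemma pl_zero : pl (@zero W) = zero.
Proof.
  rewrite <- (imp_refl zero) at 1. now rewrite (proj2 (qw5p zero)), zero_imp_one.
Qed.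

Lemma mi_zero : mi (@zero W) = zero.
Proof.
  rewrite <- (imp_refl zero) at 1.
  rewrite (proj2 (qw5m zero)), zero_imp_neg, zero_imp_one. apply imp_refl.
Qed.

Lemma zero_imp_mi_neg (x : W) : imp zero (mi (neg x)) = imp (pl x) zero.
Proof.
  rewrite (proj1 (qw5m _)), <- qw1, (qw1 (imp one x)), qw8, qw7.
  now rewrite <- (qw7 zero (pl x)), (proj1 (qw5p x)), qw7.
Qed.

Lemma join_id (x : W) : join x x = imp zero x.
Proof.
  unfold join. rewrite !imp_refl, pl_zero, mi_zero, zero_imp_mi_neg.
  now rewrite (qw6 zero x), pl_zero, mi_zero.
Qed.

Lemma join_zero_imp (x y : W) : join (imp zero x) (imp zero y) = join x y.
Proof. rewrite <- qw12. apply zero_imp_imp. Qed.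

Lemma mu_rel_iff (x y : W) : mu_rel x y <-> imp zero x = imp zero y.
Proof.
  unfold mu_rel, le. split.
  - intros [Hxy Hyx]. rewrite <- Hxy, <- Hyx. apply qw10.
  - intro E. rewrite <- (join_zero_imp x y), <- (join_zero_imp y x), E.
    now rewrite join_id, zero_imp_idem.
Qed.

Lemma tau_rel_sym (x y : W) : tau_rel x y -> tau_rel y x.
Proof. unfold tau_rel. intuition. Qed.

Lemma mu_tau_diag (x y : W) : mu_rel x y /\ tau_rel x y <-> x = y.
Proof.
  split.
  - intros [Hmu [-> | [Hx Hy]]]; [reflexivity|].
    unfold inR in Hx, Hy. rewrite <- Hx, <- Hy. now apply mu_rel_iff.
  - intros <-. split; [now apply mu_rel_iff | now left].
Qed.

Lemma Gen_mu_tau_total (x y : W) : Gen mu_rel tau_rel x y.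
Proof.
  apply Gen_of_chain with (imp zero x) (imp zero y).
  - apply mu_rel_iff. now rewrite zero_imp_idem.
  - right. split; apply inR_zero_imp.
  - apply mu_rel_iff. apply zero_imp_idem.
Qed.

End QuasiWajsbergStar.

Theorem proposition4p2 (W : qw_ops) (HW : is_quasi_wajsberg_star W) :
  (forall x y : W, mu_rel x y <-> imp zero x = imp zero y) /\
  (forall x y : W, (mu_rel x y /\ tau_rel x y) <-> x = y) /\
  (forall x y : W, Gen (@mu_rel W) (@tau_rel W) x y) /\
  ((forall x y : W, rcomp (@mu_rel W) (@tau_rel W) x y) <->
   (forall x y : W, exists z : W, mu_rel x z /\ tau_rel y z)).
Proof.
  split; [exact (mu_rel_iff HW)|].
  split; [exact (mu_tau_diag HW)|].
  split; [exact (Gen_mu_tau_total HW)|].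
  apply rcomp_total_iff_sym, tau_rel_sym.
Qed.
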